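(* Let $G$ be a finite group acting linearly on $V\cong\mathbb{C}^n$. If $\alpha$ and $\beta$ are $G$-invariant $2$-cochains with $\beta$ linear and $\alpha$ linear or constant, then $\phi(\alpha,\beta)$ and $\psi(\alpha)$ are $G$-invariant. Specifically, for all $g,h,x,y\in G$ and $v_1,v_2,v_3\in V$, $$h\cdot(\phi_{x,y}(v_1,v_2,v_3))=\phi_{hxh^{-1},hyh^{-1}}(hv_1,hv_2,hv_3),$$ $$h\cdot(\phi_g(v_1,v_2,v_3))=\phi_{hgh^{-1}}(hv_1,hv_2,hv_3),\qquad h\cdot(\psi_g(v_1,v_2,v_3))=\psi_{hgh^{-1}}(hv_1,hv_2,hv_3).$$
   Context: A linear (resp. constant) 2-cochain is $\alpha=\sum_g\alpha_gg$ with $\alpha_g:\bigwedge^2V\to V$ (resp. $\to\mathbb{C}$) linear; it is $G$-invariant if $h(\alpha_g(v,w))=\alpha_{hgh^{-1}}(hv,hw)$ for all $g,h,v,w$. For such $\alpha$, $\psi(\alpha)=\sum_g\psi_gg$ with $\psi_g(v_1,v_2,v_3)=\alpha_g(v_1,v_2)(gv_3-v_3)+\alpha_g(v_2,v_3)(gv_1-v_1)+\alpha_g(v_3,v_1)(gv_2-v_2)\in S(V)$. For $\alpha$ linear or constant and $\beta$ linear, $\phi(\alpha,\beta)=\sum_g\phi_gg$ with $\phi_g=\sum_{xy=g}\phi_{x,y}$ and $\phi_{x,y}(v_1,v_2,v_3)=\alpha_x(v_1+yv_1,\beta_y(v_2,v_3))+\alpha_x(v_2+yv_2,\beta_y(v_3,v_1))+\alpha_x(v_3+yv_3,\beta_y(v_1,v_2))$.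 $G$ acts on $S(V)$ by algebra automorphisms extending its action on $V$ (and trivially on $\mathbb{C}$). A 3-cochain $\sum_g\gamma_gg$ is $G$-invariant if $h(\gamma_g(v_1,v_2,v_3))=\gamma_{hgh^{-1}}(hv_1,hv_2,hv_3)$. *)

From HB Require Import structures.
From mathcomp Require Import all_boot all_algebra all_fingroup.
From mathcomp Require Import reals.
From mathcomp Require Import complex.
From mathcomp Require Import mpoly.
Set Implicit Arguments. Unset Strict Implicit. Unset Printing Implicit Defensive.
Import GRing.Theory.
Local Open Scope ring_scope.

(* The complex numbers: C = R[i] for R : realType (any realType is iso to the reals).
   The symmetric algebra S(V) is the polynomial ring {mpoly R[i][n]}, with V embedded
   as the linear forms via the standard basis: v |-> \sum_i v_i X_i. *)

Definition embV (R : realType) (n : nat) (v : 'rV[R[i]]_n) : {mpoly R[i][n]} :=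
  \sum_(i < n) v 0 i *: 'X_i.

Definition linear_action (R : realType) (n : nat) (gT : finGroupType)
    (act : gT -> 'rV[R[i]]_n -> 'rV[R[i]]_n) : Prop :=
  [/\ (forall v, act 1%g v = v),
      (forall g h v, act (g * h)%g v = act g (act h v)) &
      (forall g (a : R[i]) u w, act g (a *: u + w) = a *: act g u + act g w)].

(* The action of gT on S(V): the unique algebra automorphism extending the action on V
   (X_i = e_i is sent to the linear form of act h e_i). *)
Definition actS (R : realType) (n : nat) (gT : finGroupType)
    (act : gT -> 'rV[R[i]]_n -> 'rV[R[i]]_n) (h : gT) (p : {mpoly R[i][n]}) :
    {mpoly R[i][n]} :=
  comp_mpoly [tuple embV (act h (delta_mx 0 i)) | i < n] p.

Definition lin_cochain (R : realType) (n : nat) (gT : finGroupType)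
    (al : gT -> 'rV[R[i]]_n -> 'rV[R[i]]_n -> 'rV[R[i]]_n) : Prop :=
  forall g,
  [/\ (forall (a : R[i]) u1 u2 w, al g (a *: u1 + u2) w = a *: al g u1 w + al g u2 w),
      (forall (a : R[i]) u w1 w2, al g u (a *: w1 + w2) = a *: al g u w1 + al g u w2) &
      (forall u, al g u u = 0)].

Definition const_cochain (R : realType) (n : nat) (gT : finGroupType)
    (al : gT -> 'rV[R[i]]_n -> 'rV[R[i]]_n -> R[i]) : Prop :=
  forall g,
  [/\ (forall (a : R[i]) u1 u2 w, al g (a *: u1 + u2) w = a * al g u1 w + al g u2 w),
      (forall (a : R[i]) u w1 w2, al g u (a *: w1 + w2) = a * al g u w1 + al g u w2) &
      (forall u, al g u u = 0)].

Definition lin_cochain_inv (R : realType) (n : nat) (gT : finGroupType)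
    (act : gT -> 'rV[R[i]]_n -> 'rV[R[i]]_n)
    (al : gT -> 'rV[R[i]]_n -> 'rV[R[i]]_n -> 'rV[R[i]]_n) : Prop :=
  forall g h v w, act h (al g v w) = al (h * g * h^-1)%g (act h v) (act h w).

Definition const_cochain_inv (R : realType) (n : nat) (gT : finGroupType)
    (act : gT -> 'rV[R[i]]_n -> 'rV[R[i]]_n)
    (al : gT -> 'rV[R[i]]_n -> 'rV[R[i]]_n -> R[i]) : Prop :=
  forall g h v w, al g v w = al (h * g * h^-1)%g (act h v) (act h w).

(* phi_{x,y}, phi_g and psi_g.  The 2-cochain alpha is passed through its values
   viewed in S(V) ([a] = embV o alpha for linear alpha, polynomial constant for
   constant alpha); beta is linear. *)
Definition phi_xy (R : realType) (n : nat) (gT : finGroupType)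
    (act : gT -> 'rV[R[i]]_n -> 'rV[R[i]]_n)
    (a : gT -> 'rV[R[i]]_n -> 'rV[R[i]]_n -> {mpoly R[i][n]})
    (be : gT -> 'rV[R[i]]_n -> 'rV[R[i]]_n -> 'rV[R[i]]_n)
    (x y : gT) (v1 v2 v3 : 'rV[R[i]]_n) : {mpoly R[i][n]} :=
  a x (v1 + act y v1) (be y v2 v3) + a x (v2 + act y v2) (be y v3 v1)
  + a x (v3 + act y v3) (be y v1 v2).

Definition phi_g (R : realType) (n : nat) (gT : finGroupType)
    (act : gT -> 'rV[R[i]]_n -> 'rV[R[i]]_n)
    (a : gT -> 'rV[R[i]]_n -> 'rV[R[i]]_n -> {mpoly R[i][n]})
    (be : gT -> 'rV[R[i]]_n -> 'rV[R[i]]_n -> 'rV[R[i]]_n)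
    (g : gT) (v1 v2 v3 : 'rV[R[i]]_n) : {mpoly R[i][n]} :=
  \sum_(p : gT * gT | (p.1 * p.2)%g == g) phi_xy act a be p.1 p.2 v1 v2 v3.

Definition psi_g (R : realType) (n : nat) (gT : finGroupType)
    (act : gT -> 'rV[R[i]]_n -> 'rV[R[i]]_n)
    (a : gT -> 'rV[R[i]]_n -> 'rV[R[i]]_n -> {mpoly R[i][n]})
    (g : gT) (v1 v2 v3 : 'rV[R[i]]_n) : {mpoly R[i][n]} :=
  a g v1 v2 * embV (act g v3 - v3) + a g v2 v3 * embV (act g v1 - v1)
  + a g v3 v1 * embV (act g v2 - v2).

Definition cochain3_inv (R : realType) (n : nat) (gT : finGroupType)
    (act : gT -> 'rV[R[i]]_n -> 'rV[R[i]]_n)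
    (ga : gT -> 'rV[R[i]]_n -> 'rV[R[i]]_n -> 'rV[R[i]]_n -> {mpoly R[i][n]}) : Prop :=
  forall g h v1 v2 v3,
    actS act h (ga g v1 v2 v3) = ga (h * g * h^-1)%g (act h v1) (act h v2) (act h v3).

Definition phi_psi_invariant (R : realType) (n : nat) (gT : finGroupType)
    (act : gT -> 'rV[R[i]]_n -> 'rV[R[i]]_n)
    (a : gT -> 'rV[R[i]]_n -> 'rV[R[i]]_n -> {mpoly R[i][n]})
    (be : gT -> 'rV[R[i]]_n -> 'rV[R[i]]_n -> 'rV[R[i]]_n) : Prop :=
  [/\ (forall h x y v1 v2 v3,
         actS act h (phi_xy act a be x y v1 v2 v3)
         = phi_xy act a be (h * x * h^-1)%g (h * y * h^-1)%g
                  (act h v1) (act h v2) (act h v3)),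
      cochain3_inv act (phi_g act a be) &
      cochain3_inv act (psi_g act a)].

From HB Require Import structures.
From mathcomp Require Import all_boot all_algebra all_fingroup.
From mathcomp Require Import reals.
From mathcomp Require Import complex.
From mathcomp Require Import mpoly.
Import GRing.Theory.
Local Open Scope ring_scope.

(* The action on S(V) is a ring morphism that restricts to the given action on
   V, so each ingredient of phi_{x,y} and psi_g is carried to the corresponding
   ingredient at the conjugated indices; for phi_g one then reindexes the sum
   over the factorisations g = x y by conjugation with h. *)

Lemma conjgVE (gT : finGroupType) (h x : gT) : (h * x * h^-1 = x ^ h^-1)%g.
Proof. by rewrite conjgE invgK mulgA. Qed.

Lemma sum_factorisations_conjg (gT : finGroupType) (M : nmodType)
    (F : gT * gT -> M) (g h : gT) :
  \sum_(p | (p.1 * p.2 == g ^ h)%g) F p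
  = \sum_(p | (p.1 * p.2 == g)%g) F (p.1 ^ h, p.2 ^ h)%g.
Proof.
rewrite (reindex (fun p : gT * gT => (p.1 ^ h, p.2 ^ h)%g)); last first.
  by exists (fun p : gT * gT => (p.1 ^ h^-1, p.2 ^ h^-1)%g) => -[x y] _ /=;
    rewrite ?conjgK ?conjgKV.
by apply: eq_bigl => p; rewrite /= -conjMg (inj_eq (@conjg_inj _ _)).
Qed.

Section LinearForms.
Variables (R : realType) (n : nat).

Lemma embVD (u w : 'rV[R[i]]_n) : embV (u + w) = embV u + embV w.
Proof. by rewrite /embV -big_split; apply: eq_bigr => j _; rewrite mxE scalerDl. Qed.

Lemma embVZ (a : R[i]) (u : 'rV[R[i]]_n) : embV (a *: u) = a *: embV u.
Proof. by rewrite /embV scaler_sumr; apply: eq_bigr => j _; rewrite mxE scalerA. Qed.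

Lemma embV0 : embV (0 : 'rV[R[i]]_n) = 0.
Proof. by rewrite -(scale0r 0) embVZ scale0r. Qed.

End LinearForms.

Section Equivariance.
Variables (R : realType) (n : nat) (gT : finGroupType).
Variable act : gT -> 'rV[R[i]]_n -> 'rV[R[i]]_n.
Hypothesis act_linear : linear_action act.

Local Notation V := 'rV[R[i]]_n.
Local Notation SV := {mpoly R[i][n]}.

Lemma act0 g : act g 0 = 0.
Proof.
case: act_linear => _ _ lin; apply: (addIr (act g 0)).
by have := lin g 1 0 0; rewrite !scale1r addr0 add0r => <-.
Qed.

Lemma actD g u w : act g (u + w) = act g u + act g w.
Proof. by case: act_linear => _ _ lin; have := lin g 1 u w; rewrite !scale1r. Qed.

Lemma actZ g a u : act g (a *: u) = a *: act g u.
Proof.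
by case: act_linear => _ _ lin; have := lin g a u 0; rewrite !addr0 act0 addr0.
Qed.

Lemma actB g u w : act g (u - w) = act g u - act g w.
Proof. by rewrite actD -scaleN1r actZ scaleN1r. Qed.

Lemma actMg g h v : act (g * h)%g v = act g (act h v).
Proof. by case: act_linear. Qed.

Lemma act_conj h y v : act (h * y * h^-1)%g (act h v) = act (h * y)%g v.
Proof. by rewrite -actMg -!mulgA mulVg mulg1. Qed.

Lemma actS_embV h v : actS act h (embV v) = embV (act h v).
Proof.
rewrite /actS {2}(row_sum_delta v) /embV raddf_sum /=.
pose L u : SV := \sum_(i < n) act h u 0 i *: 'X_i.
have LD : {morph L : u w / u + w} by move=> u w; rewrite /L actD; apply: embVD.
have L0 : L 0 = 0 by rewrite /L act0; apply: embV0.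
rewrite -/(L _) (big_morph L LD L0); apply: eq_bigr => j _.
rewrite comp_mpolyZ comp_mpolyXU -tnth_nth tnth_mktuple /L actZ.
by rewrite -/(embV _) -/(embV _) embVZ.
Qed.

Definition sym_cochain_inv (a : gT -> V -> V -> SV) : Prop :=
  forall g h u w, actS act h (a g u w) = a (h * g * h^-1)%g (act h u) (act h w).

Lemma lin_cochain_inv_embV (al : gT -> V -> V -> V) :
  lin_cochain_inv act al -> sym_cochain_inv (fun g u w => embV (al g u w)).
Proof. by move=> al_inv g h u w; rewrite actS_embV al_inv. Qed.

Lemma const_cochain_inv_polyC (al : gT -> V -> V -> R[i]) :
  const_cochain_inv act al -> sym_cochain_inv (fun g u w => (al g u w)%:MP).
Proof. by move=> al_inv g h u w; rewrite /actS comp_mpolyC -al_inv. Qed.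

Variables (a : gT -> V -> V -> SV) (be : gT -> V -> V -> V).
Hypotheses (a_inv : sym_cochain_inv a) (be_inv : lin_cochain_inv act be).

Lemma phi_xy_inv h x y v1 v2 v3 :
  actS act h (phi_xy act a be x y v1 v2 v3)
  = phi_xy act a be (h * x * h^-1)%g (h * y * h^-1)%g (act h v1) (act h v2) (act h v3).
Proof.
rewrite /phi_xy /actS !rmorphD /= -!/(actS act h _) !a_inv.
by rewrite !actD !be_inv !act_conj !actMg.
Qed.

Lemma phi_g_inv : cochain3_inv act (phi_g act a be).
Proof.
move=> g h v1 v2 v3; rewrite /phi_g /actS rmorph_sum /=.
under eq_bigr do rewrite -/(actS act h _) phi_xy_inv !conjgVE.
by rewrite conjgVE sum_factorisations_conjg.
Qed.

Lemma psi_g_inv : cochain3_inv act (psi_g act a).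
Proof.
move=> g h v1 v2 v3; rewrite /psi_g /actS !rmorphD !rmorphM /= -!/(actS act h _).
by rewrite !a_inv !actS_embV !actB !act_conj !actMg.
Qed.

Lemma phi_psi_invariantP : phi_psi_invariant act a be.
Proof. by split; [exact: phi_xy_inv | exact: phi_g_inv | exact: psi_g_inv]. Qed.

End Equivariance.

Theorem lemma5p1 (R : realType) (n : nat) (gT : finGroupType)
    (act : gT -> 'rV[R[i]]_n -> 'rV[R[i]]_n)
    (Hact : linear_action act)
    (be : gT -> 'rV[R[i]]_n -> 'rV[R[i]]_n -> 'rV[R[i]]_n)
    (Hbe : lin_cochain be) (Hbe_inv : lin_cochain_inv act be) :
  (forall al : gT -> 'rV[R[i]]_n -> 'rV[R[i]]_n -> 'rV[R[i]]_n,
     lin_cochain al -> lin_cochain_inv act al ->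
     phi_psi_invariant act (fun g u w => embV (al g u w)) be)
  /\
  (forall al : gT -> 'rV[R[i]]_n -> 'rV[R[i]]_n -> R[i],
     const_cochain al -> const_cochain_inv act al ->
     phi_psi_invariant act (fun g u w => (al g u w)%:MP) be).
Proof.
split=> al _ al_inv; apply: phi_psi_invariantP => //.
- exact: lin_cochain_inv_embV.
- exact: const_cochain_inv_polyC.
Qed.
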